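(* Let $S$ be a $\Gamma$-hemiring, let $\mu$ be a fuzzy right h-ideal of $S$ and let $x \in S$. Then the extension $\langle x,\mu\rangle$ of $\mu$ by $x$ is a fuzzy right h-ideal of $S$.
   Context: A $\Gamma$-hemiring is a pair of additive commutative semigroups with zero $S$ and $\Gamma$ together with a map $S\times\Gamma\times S\to S$, $(a,\alpha,b)\mapsto a\alpha b$, such that for all $a,b,c\in S$ and $\alpha,\beta\in\Gamma$: $(a+b)\alpha c=a\alpha c+b\alpha c$; $a\alpha(b+c)=a\alpha b+a\alpha c$; $a(\alpha+\beta)b=a\alpha b+a\beta b$; $a\alpha(b\beta c)=(a\alpha b)\beta c$; $0\alpha a=0=a\alpha 0$; $a0b=0=b0a$. A fuzzy subset of $S$ is a map $\mu:S\to[0,1]$; it is non-empty if $\mu(x)\neq 0$ for some $x\in S$. A non-empty fuzzy subset $\mu$ is a fuzzy right h-ideal if for all $x,y,a,b,z\in S$ and $\gamma\in\Gamma$: (i) $\mu(x+y)\ge\min\{\mu(x),\mu(y)\}$; (ii) $\mu(x\gamma y)\ge\mu(x)$; (iii) $x+a+z=b+z$ implies $\mu(x)\ge\min\{\mu(a),\mu(b)\}$. For a fuzzy subset $\mu$ of $S$ and $x\in S$, the extension of $\mu$ by $x$ is the fuzzy subset $\langle x,\mu\rangle$ defined by $\langle x,\mu\rangle(y)=\inf_{s\in S,\ \alpha,\gamma\in\Gamma}\mu(x\alpha s\gamma y)$ for $y\in S$. *)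

From mathcomp Require Import all_boot all_order all_algebra.
From mathcomp Require Import classical_sets reals.

Set Implicit Arguments. Unset Strict Implicit. Unset Printing Implicit Defensive.
Local Open Scope classical_set_scope.
Local Open Scope ring_scope.

Record GammaHemiring := {
  car :> Type;
  gam : Type;
  addS : car -> car -> car;
  zeroS : car;
  addG : gam -> gam -> gam;
  zeroG : gam;
  tmul : car -> gam -> car -> car;
  addSA : forall a b c, addS a (addS b c) = addS (addS a b) c;
  addSC : forall a b, addS a b = addS b a;
  add0S : forall a, addS zeroS a = a;
  addGA : forall a b c, addG a (addG b c) = addG (addG a b) c;
  addGC : forall a b, addG a b = addG b a;
  add0G : forall a, addG zeroG a = a;
  tmulDl : forall a b c al, tmul (addS a b) al c = addS (tmul a al c) (tmul b al c);
  tmulDr : forall a b c al, tmul a al (addS b c) = addS (tmul a al b) (tmul a al c);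
  tmulDm : forall a b al be, tmul a (addG al be) b = addS (tmul a al b) (tmul a be b);
  tmulA : forall a b c al be, tmul a al (tmul b be c) = tmul (tmul a al b) be c;
  tmul0l : forall a al, tmul zeroS al a = zeroS;
  tmul0r : forall a al, tmul a al zeroS = zeroS;
  tmul0m : forall a b, tmul a zeroG b = zeroS /\ tmul b zeroG a = zeroS
}.

Section Fuzzy.
Variables (R : realType) (S : GammaHemiring).

Definition fuzzy_subset (mu : S -> R) : Prop :=
  forall x, 0 <= mu x <= 1.

Definition fuzzy_nonempty (mu : S -> R) : Prop :=
  exists x, mu x != 0.

Definition fuzzy_right_h_ideal (mu : S -> R) : Prop :=
  [/\ fuzzy_subset mu, fuzzy_nonempty mu,
      (forall x y, mu (addS x y) >= Num.min (mu x) (mu y)),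
      (forall x y (g : gam S), mu (tmul x g y) >= mu x) &
      (forall x a b z, addS (addS x a) z = addS b z ->
                         mu x >= Num.min (mu a) (mu b))].

Definition extension (x : S) (mu : S -> R) : S -> R :=
  fun y => inf [set r | exists (s : S) (al ga : gam S),
                          r = mu (tmul (tmul x al s) ga y)].

End Fuzzy.

From mathcomp Require Import all_boot all_order all_algebra.
From mathcomp Require Import classical_sets reals.
Import Order.TTheory GRing.Theory Num.Theory.
Local Open Scope classical_set_scope.
Local Open Scope ring_scope.

(* Every term of the infimum defining <x, mu>(y) is mu evaluated at the left
   translate (x al s) ga y.  Left translation is additive, by distributivity,
   and commutes with right multiplication, by associativity, so each closure
   property of mu holds term by term and survives taking the infimum.  The
   extension is non-empty because it agrees with mu at 0, and mu 0 dominates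
   every value of mu since y ga 0 = 0 for the zero of Gamma. *)

Section Extension.
Variables (R : realType) (S : GammaHemiring) (mu : S -> R) (x : S).
Hypothesis mu_ge0 : forall y, 0 <= mu y.

Lemma extension_le_mu y s al ga :
  extension x mu y <= mu (tmul (tmul x al s) ga y).
Proof.
apply: ge_inf; last by exists s, al, ga.
by exists 0 => _ [s' [al' [ga' ->]]].
Qed.

Lemma lb_le_extension y c :
  (forall s al ga, c <= mu (tmul (tmul x al s) ga y)) -> c <= extension x mu y.
Proof.
move=> lb_c; apply: lb_le_inf => [|_ [s [al [ga ->]]]] //.
by exists (mu (tmul (tmul x (zeroG S) x) (zeroG S) y)); exists x, (zeroG S), (zeroG S).
Qed.

Lemma extension0 : extension x mu (zeroS S) = mu (zeroS S).
Proof.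
apply/le_anti/andP; split.
  by have := extension_le_mu (zeroS S) x (zeroG S) (zeroG S); rewrite tmul0r.
by apply: lb_le_extension => s al ga; rewrite tmul0r.
Qed.

Lemma fuzzy_subset_extension : fuzzy_subset mu -> fuzzy_subset (extension x mu).
Proof.
move=> mu01 y; apply/andP; split; first by apply: lb_le_extension.
apply: le_trans (extension_le_mu y x (zeroG S) (zeroG S)) _.
by case/andP: (mu01 (tmul (tmul x (zeroG S) x) (zeroG S) y)).
Qed.

Lemma extension_addS :
  (forall y z, Num.min (mu y) (mu z) <= mu (addS y z)) ->
  forall y z, Num.min (extension x mu y) (extension x mu z)
                <= extension x mu (addS y z).
Proof.
move=> mu_add y z; apply: lb_le_extension => s al ga.
rewrite tmulDr; apply: le_trans (mu_add _ _).
by rewrite le_min !ge_min !extension_le_mu ?orbT.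
Qed.

Lemma extension_tmul :
  (forall y z (g : gam S), mu y <= mu (tmul y g z)) ->
  forall y z (g : gam S), extension x mu y <= extension x mu (tmul y g z).
Proof.
move=> mu_tmul y z g; apply: lb_le_extension => s al ga.
by rewrite tmulA; apply: le_trans (mu_tmul _ _ _); apply: extension_le_mu.
Qed.

Lemma extension_h_closed :
  (forall y a b z, addS (addS y a) z = addS b z ->
                   Num.min (mu a) (mu b) <= mu y) ->
  forall y a b z, addS (addS y a) z = addS b z ->
    Num.min (extension x mu a) (extension x mu b) <= extension x mu y.
Proof.
move=> mu_h y a b z yaz_bz; apply: lb_le_extension => s al ga.
set t := tmul x al s.
have tyaz_tbz : addS (addS (tmul t ga y) (tmul t ga a)) (tmul t ga z)
                = addS (tmul t ga b) (tmul t ga z).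
  by rewrite -!tmulDr yaz_bz.
apply: le_trans (mu_h _ _ _ _ tyaz_tbz).
by rewrite le_min !ge_min !extension_le_mu ?orbT.
Qed.

End Extension.

Lemma mu_le_mu0 {R : realType} {S : GammaHemiring} {mu : S -> R} :
  (forall y z (g : gam S), mu y <= mu (tmul y g z)) -> forall y, mu y <= mu (zeroS S).
Proof. by move=> mu_tmul y; rewrite -(proj1 (tmul0m y y)) mu_tmul. Qed.

Theorem theorem3p2 (R : realType) (S : GammaHemiring) (mu : S -> R) (x : S) :
  fuzzy_right_h_ideal mu -> fuzzy_right_h_ideal (extension x mu).
Proof.
case=> mu01 [y0 mu_y0_neq0] mu_add mu_tmul mu_h.
have mu_ge0 y : 0 <= mu y by case/andP: (mu01 y).
split.
- exact: fuzzy_subset_extension.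
- have mu_y0_gt0 : 0 < mu y0 by rewrite lt_def mu_y0_neq0 mu_ge0.
  exists (zeroS S); rewrite extension0 //.
  by rewrite gt_eqF // (lt_le_trans mu_y0_gt0 (mu_le_mu0 mu_tmul y0)).
- exact: extension_addS.
- exact: extension_tmul.
- exact: extension_h_closed.
Qed.
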